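(* Let $H = N \rtimes T$ be a finite group where $N$ is abelian and $T$ is flat. Then $\mathrm{MaxDim}(H) = \mathrm{MaxDim}_T(N) + \mathrm{MaxDim}(T)$, where $T$ acts on $N$ by conjugation.
   Context: All groups are finite. A subset $s$ of a group is irredundant if $\langle s \setminus \{h\}\rangle \neq \langle s \rangle$ for every $h \in s$; $m(G)$ is the maximal size of an irredundant generating set of $G$ and $i(G)$ the maximal size of an irredundant subset of $G$. $G$ is flat if $m(G) = i(G)$. A finite set $\{H_1,\dots,H_n\}$ of subgroups of $G$ is in general position if for every $1 \le j \le n$, $\bigcap_{i \neq j} H_i \supsetneq \bigcap_{i} H_i$. $\mathrm{MaxDim}(G)$ is the largest cardinality of a collection of maximal subgroups of $G$ in general position. If a group $B$ acts on $G$, $\mathrm{MaxDim}_B(G)$ is the largest cardinality of a collection of maximal $B$-invariant (proper) subgroups of $G$ that is in general position. *)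

From mathcomp Require Import all_boot all_fingroup.
From mathcomp Require Import gseries.
Set Implicit Arguments. Unset Strict Implicit. Unset Printing Implicit Defensive.
Local Open Scope group_scope.

Section Defs.
Variable gT : finGroupType.

Definition irredundant (s : {set gT}) : bool :=
  [forall h in s, <<s :\ h>> != <<s>>].

Definition m_gen (G : {set gT}) : nat :=
  \max_(s : {set gT} | [&& s \subset G, <<s>> == G & irredundant s]) #|s|.

Definition i_irr (G : {set gT}) : nat :=
  \max_(s : {set gT} | (s \subset G) && irredundant s) #|s|.

Definition flat (G : {set gT}) : bool := m_gen G == i_irr G.

(* Intersections are taken inside the ambient group G (empty intersection = G). *)
Definition gen_pos (G : {set gT}) (S : {set {group gT}}) : bool :=
  [forall K in S,
     (G :&: \bigcap_(L in S) (L : {set gT}))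
       \proper (G :&: \bigcap_(L in S :\ K) (L : {set gT}))].

Definition MaxDim (G : {set gT}) : nat :=
  \max_(S : {set {group gT}} | [forall M in S, maximal M G] && gen_pos G S) #|S|.

Definition maxinv (B G : {set gT}) (M : {group gT}) : bool :=
  [max M of K | (K \proper G) && (B \subset 'N(K))].

Definition MaxDim_act (B G : {set gT}) : nat :=
  \max_(S : {set {group gT}} |
        [forall M in S, maxinv B G M] && gen_pos G S) #|S|.

End Defs.

From mathcomp Require Import all_boot all_fingroup.
From mathcomp Require Import gseries.
Set Implicit Arguments. Unset Strict Implicit. Unset Printing Implicit Defensive.
Local Open Scope group_scope.

(* For K maximal T-invariant in N and L maximal in T, the subgroups KT and NL
   are maximal in H, and general position transfers because KT meets N in K
   and NL meets T in L; this gives MaxDim_T(N) + MaxDim(T) <= MaxDim(H).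
   Conversely, split a family F of maximal subgroups of H in general position
   into a subfamily X of subgroups not containing N, chosen minimal with the
   same intersection with N, and the rest. Since N is abelian, the traces
   M :&: N (M in X) are maximal T-invariant and in general position in N.
   For each other M, the T-component of an element lying in all members of F
   but M avoids the group generated by N, M and the intersection of X, which
   contains the T-components attached to the other members; these components
   form an irredundant subset of T, and i(T) = m(T) <= MaxDim(T) by flatness. *)

Section GeneralPosition.
Variable gT : finGroupType.
Implicit Types (G : {set gT}) (S : {set {group gT}}).

Lemma bigcap_setD1S G S (K : {group gT}) :
  G :&: \bigcap_(L in S) L \subset G :&: \bigcap_(L in S :\ K) L.
Proof. by apply/setIS/bigcapsP => L /setD1P[_ LS]; apply: bigcap_inf. Qed.

Lemma gen_posP G S :
  reflect (forall K, K \in S -> exists x,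
             [/\ x \in G, x \notin K & forall L, L \in S -> L != K -> x \in L])
          (gen_pos G S).
Proof.
apply: (iffP forallP) => [posS K KS | witS K].
  have /properP[_ [x]] := implyP (posS K) KS.
  rewrite !inE => /andP[xG /bigcapP xS]; rewrite xG /= => xNS.
  have xSK L : L \in S -> L != K -> x \in L by move=> LS LK; apply: xS; apply/setD1P.
  exists x; split=> //; apply: contra xNS => xK; apply/bigcapP => L LS.
  by case: (eqVneq L K) => [-> // | /(xSK L LS)].
apply/implyP => KS; have [x [xG xK xS]] := witS K KS.
apply/properP; split; first exact: bigcap_setD1S.
exists x; first by rewrite inE xG; apply/bigcapP => L /setD1P[LK LS]; apply: xS.
by rewrite inE xG; apply: contra xK => /bigcapP; apply.
Qed.

Lemma gen_pos_subfamily G S : exists2 X : {set {group gT}}, X \subset S &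
  gen_pos G X /\ G :&: \bigcap_(L in X) L = G :&: \bigcap_(L in S) L.
Proof.
pose P (X : {set {group gT}}) :=
  (X \subset S) && (G :&: \bigcap_(L in X) L == G :&: \bigcap_(L in S) L).
have [|X /andP[sXS /eqP capX] minX] := arg_minnP (fun X : {set {group gT}} => #|X|) (_ : P S).
  by rewrite /P subxx eqxx.
exists X => //; split=> //; apply/forallP => K; apply/implyP => KX.
rewrite properEneq bigcap_setD1S andbT; apply/eqP => capXK.
have := minX (X :\ K); rewrite /P (subset_trans (subD1set X K)) // -capXK capX eqxx.
by rewrite (cardsD1 K X) KX add1n ltnn => /(_ isT).
Qed.

Lemma gen_pos_imset G S (f : {group gT} -> {group gT}) :
  {in S, forall K, f K :&: G = K :&: G} -> gen_pos G S ->
  gen_pos G (f @: S) /\ {in S &, injective f}.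
Proof.
move=> fG /gen_posP witS.
have mem_f K x : K \in S -> x \in G -> (x \in f K) = (x \in K).
  move=> KS xG; have := congr1 (fun A : {set gT} => x \in A) (fG K KS).
  by rewrite !inE xG !andbT.
split.
  apply/gen_posP => _ /imsetP[K KS ->]; have [x [xG xK xS]] := witS K KS.
  exists x; split; rewrite ?mem_f // => _ /imsetP[L LS ->] fLK.
  by rewrite mem_f ?xS //; apply: contraNneq fLK => ->.
move=> K L KS LS fKL; case: (eqVneq K L) => // KL.
have [x [xG xK xS]] := witS K KS.
by move: xK; rewrite -mem_f // fKL mem_f ?xS // eq_sym.
Qed.

Lemma gen_posU G1 G2 G (A B : {set {group gT}}) :
  G1 \subset G -> G2 \subset G ->
  {in A, forall K : {group gT}, G2 \subset K} ->
  {in B, forall L : {group gT}, G1 \subset L} ->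
  gen_pos G1 A -> gen_pos G2 B -> gen_pos G (A :|: B).
Proof.
suff witU G1' (A' B' : {set {group gT}}) :
    G1' \subset G -> {in B', forall L : {group gT}, G1' \subset L} ->
    gen_pos G1' A' -> forall K, K \in A' -> exists x,
    [/\ x \in G, x \notin K & forall L, L \in A' :|: B' -> L != K -> x \in L].
  move=> sG1 sG2 sA sB posA posB; apply/gen_posP => K /setUP[KA | KB].
    exact: (witU G1 A B).
  by rewrite setUC; apply: (witU G2 B A).
move=> sG1 sB /gen_posP witA K KA; have [x [xG xK xA]] := witA K KA.
exists x; split=> // [|L /setUP[LA | LB] LK]; first exact: (subsetP sG1).
  exact: xA.
exact: (subsetP (sB L LB)).
Qed.

Lemma card_le_max_gen_pos (P : pred {group gT}) G S :
  {in S, forall M, P M} -> gen_pos G S ->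
  #|S| <= \max_(S' : {set {group gT}} | [forall M in S', P M] && gen_pos G S') #|S'|.
Proof.
move=> PS posS; apply: (leq_bigmax_cond (F := fun S' : {set {group gT}} => #|S'|)).
by rewrite posS andbT; apply/forall_inP.
Qed.

Lemma max_gen_pos_attained (P : pred {group gT}) G : exists2 S : {set {group gT}},
  {in S, forall M, P M} /\ gen_pos G S &
  \max_(S' : {set {group gT}} | [forall M in S', P M] && gen_pos G S') #|S'| = #|S|.
Proof.
have [|S /andP[/forall_inP PS posS] ->] := @eq_bigmax_cond _
    (fun S' : {set {group gT}} => [forall M in S', P M] && gen_pos G S')
    (fun S' => #|S'|).
  apply/card_gt0P; exists set0; rewrite unfold_in /=.
  by apply/andP; split; apply/forallP => M; rewrite inE.
by exists S.
Qed.

Lemma card_le_MaxDim G S :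
  {in S, forall M : {group gT}, maximal M G} -> gen_pos G S -> #|S| <= MaxDim G.
Proof. exact: (card_le_max_gen_pos (P := fun M : {group gT} => maximal M G)). Qed.

Lemma card_le_MaxDim_act B G S :
  {in S, forall M : {group gT}, maxinv B G M} -> gen_pos G S -> #|S| <= MaxDim_act B G.
Proof. exact: (card_le_max_gen_pos (P := maxinv B G)). Qed.

Lemma MaxDim_attained G :
  exists2 S : {set {group gT}},
    {in S, forall M : {group gT}, maximal M G} /\ gen_pos G S & MaxDim G = #|S|.
Proof. exact: (max_gen_pos_attained (fun M : {group gT} => maximal M G)). Qed.

Lemma MaxDim_act_attained B G :
  exists2 S : {set {group gT}},
    {in S, forall M : {group gT}, maxinv B G M} /\ gen_pos G S & MaxDim_act B G = #|S|.
Proof. exact: (max_gen_pos_attained (maxinv B G)). Qed.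

Lemma card_le_i_irr G (s : {set gT}) : s \subset G -> irredundant s -> #|s| <= i_irr G.
Proof.
move=> sG irr; apply: (leq_bigmax_cond (F := fun s : {set gT} => #|s|)).
by rewrite sG irr.
Qed.

Lemma irredundant_imset (I : finType) (D : {set I}) (t : I -> gT) (W : I -> {group gT}) :
  {in D, forall i, t i \notin W i} -> {in D &, forall i j, j != i -> t j \in W i} ->
  irredundant (t @: D) /\ {in D &, injective t}.
Proof.
move=> tW tWj; split.
  apply/forall_inP => _ /imsetP[i iD ->]; apply: contraNneq (tW i iD) => eq_gen.
  have: t i \in <<t @: D :\ t i>> by rewrite eq_gen mem_gen ?imset_f.
  apply/subsetP; rewrite gen_subG; apply/subsetP => x /setD1P[xti /imsetP[j jD xtj]].
  by rewrite xtj tWj //; apply: contraNneq xti => ji; rewrite xtj ji.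
move=> i j iD jD tij; case: (eqVneq i j) => // ij.
by move: (tWj i j iD jD); rewrite -tij (negPf (tW i iD)) eq_sym ij => /(_ isT).
Qed.

Lemma irredundant_separating_maximal (G : {group gT}) (s : {set gT}) h :
  s \subset G -> <<s>> = G -> irredundant s -> h \in s ->
  exists M : {group gT}, [/\ maximal M G, s :\ h \subset M & h \notin M].
Proof.
move=> sG gen_s irr hs.
have sGh : <<s :\ h>> \subset G by rewrite gen_subG (subset_trans (subD1set s h)).
have [eqG | [M maxM sM]] := maximal_exists sGh.
  by have /forall_inP/(_ h hs) := irr; rewrite eqG gen_s eqxx.
have sMh : s :\ h \subset M := subset_trans (subset_gen _) sM.
exists M; split=> //; apply: contraL (maxgroupp maxM) => hM.
suff sGM : G \subset M by rewrite properE sGM andbF.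
rewrite -gen_s gen_subG; apply/subsetP => x xs.
by case: (eqVneq x h) => [-> // | xh]; apply: (subsetP sMh); apply/setD1P.
Qed.

Lemma m_gen_le_MaxDim (G : {group gT}) : m_gen G <= MaxDim G.
Proof.
apply/bigmax_leqP => s /and3P[sG /eqP gen_s irr].
have /fin_all_exists[f fP] : forall h, exists M : {group gT}, h \in s ->
    [/\ maximal M G, s :\ h \subset M & h \notin M].
  move=> h; case: (boolP (h \in s)) => [hs | hs].
    by have [M] := irredundant_separating_maximal sG gen_s irr hs; exists M.
  by exists 1%G.
have in_f h k : h \in s -> k \in s -> h != k -> h \in f k.
  by move=> hs ks hk; have [_ sf _] := fP k ks; apply: (subsetP sf); apply/setD1P.
have f_inj : {in s &, injective f}.
  move=> h k hs ks fhk; case: (eqVneq h k) => // hk.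
  by have [_ _] := fP h hs; rewrite fhk in_f.
rewrite -(card_in_imset f_inj); apply: card_le_MaxDim.
  by move=> _ /imsetP[h hs ->]; have [] := fP h hs.
apply/gen_posP => _ /imsetP[h hs ->]; exists h; split.
- exact: (subsetP sG).
- by have [] := fP h hs.
- by move=> _ /imsetP[k ks ->] fkh; apply: in_f => //; apply: contraNneq fkh => ->.
Qed.

End GeneralPosition.

Section SemidirectProduct.
Variables (gT : finGroupType) (H N T : {group gT}).
Hypothesis defH : N ><| T = H.

Let mulNT : N * T = H := sdprodW defH.
Let nNT : T \subset 'N(N). Proof. by case/sdprodP: defH. Qed.
Let tiNT : N :&: T = 1. Proof. by case/sdprodP: defH. Qed.
Let sNH : N \subset H. Proof. by rewrite -mulNT mulG_subl. Qed.
Let sTH : T \subset H. Proof. by rewrite -mulNT mulG_subr. Qed.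
Let nNH : H \subset 'N(N). Proof. by rewrite -mulNT mulG_subG normG. Qed.

Lemma joinT_meetN (K : {group gT}) :
  K \subset N -> T \subset 'N(K) -> (K <*> T) :&: N = K.
Proof. by move=> sKN nKT; rewrite norm_joinEr // -group_modl // setIC tiNT mulg1. Qed.

Lemma joinN_meetT (L : {group gT}) : L \subset T -> (N <*> L) :&: T = L.
Proof.
move=> sLT; rewrite norm_joinEr ?(subset_trans sLT nNT) //.
by rewrite setIC -group_modr // setIC tiNT mul1g.
Qed.

Lemma maximal_joinT (K : {group gT}) : maxinv T N K -> maximal (K <*> T) H.
Proof.
case/maxgroupP=> /andP[ltKN nKT] maxK; have sKN := proper_sub ltKN.
have meetN := joinT_meetN sKN nKT.
apply/maxgroupP; split.
  rewrite properEneq join_subG (subset_trans sKN sNH) sTH !andbT.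
  apply: contraTneq ltKN => eqH.
  by rewrite -meetN -[K <*> T]/(gval (K <*> T)%G) eqH (setIidPr sNH) properE subxx.
move=> M ltMH sKTM; have sTM := subset_trans (joing_subr K T) sKTM.
have ltMN : M :&: N \proper N.
  rewrite properEneq subsetIr andbT; apply: contraTneq ltMH => /setIidPr sNM.
  by rewrite properE -mulNT mulG_subG sNM sTM andbF.
have nMNT : T \subset 'N(M :&: N) := normsI (subset_trans sTM (normG M)) nNT.
have sKMN : K \subset M :&: N by rewrite subsetI (subset_trans (joing_subl K T)).
have /= meetNM := maxK (M :&: N)%G (introT andP (conj ltMN nMNT)) sKMN.
rewrite norm_joinEr // -meetNM group_modr // mulNT.
exact/esym/setIidPl/proper_sub.
Qed.

Lemma maximal_joinN (L : {group gT}) : maximal L T -> maximal (N <*> L) H.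
Proof.
case/maxgroupP=> ltLT maxL; have sLT := proper_sub ltLT.
have meetT := joinN_meetT sLT.
apply/maxgroupP; split.
  rewrite properEneq join_subG sNH (subset_trans sLT sTH) !andbT.
  apply: contraTneq ltLT => eqH.
  by rewrite -meetT -[N <*> L]/(gval (N <*> L)%G) eqH (setIidPr sTH) properE subxx.
move=> M ltMH sNLM; have sNM := subset_trans (joing_subl N L) sNLM.
have ltMT : M :&: T \proper T.
  rewrite properEneq subsetIr andbT; apply: contraTneq ltMH => /setIidPr sTM.
  by rewrite properE -mulNT mulG_subG sNM sTM andbF.
have sLMT : L \subset M :&: T by rewrite subsetI (subset_trans (joing_subr N L)).
have /= meetTM := maxL (M :&: T)%G ltMT sLMT.
rewrite norm_joinEr ?(subset_trans sLT nNT) // -meetTM setIC group_modl // mulNT.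
exact/esym/setIidPr/proper_sub.
Qed.

Lemma maxinv_meetN (M : {group gT}) :
  abelian N -> maximal M H -> ~~ (N \subset M) -> maxinv T N (M :&: N)%G.
Proof.
move=> abN maxM sNM'; have [ltMH maxM'] := maxgroupP maxM.
have sMH := proper_sub ltMH.
have nNM : M \subset 'N(N) := subset_trans sMH nNH.
have joinMN : M <*> N = H.
  have sMNH : M <*> N \subset H by rewrite join_subG sMH.
  have [// | ltMNH] := eqVproper sMNH.
  by case/negP: sNM'; rewrite -(maxM' (M <*> N)%G ltMNH (joing_subl M N)) joing_subr.
apply/maxgroupP; split.
  rewrite properEneq subsetIr andbT; apply/andP; split.
    by apply: contraNneq sNM' => <-; apply: subsetIl.
  apply: subset_trans sTH _; rewrite -joinMN join_subG.
  by rewrite normsI ?normG // sub_abelian_norm ?subsetIr.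
move=> K /andP[ltKN nKT] sMNK; have sKN := proper_sub ltKN.
have nKH : H \subset 'N(K) by rewrite -mulNT mulG_subG sub_abelian_norm.
suff sKM : K \subset M by apply/eqP; rewrite eqEsubset subsetI sKM sKN sMNK.
have sMKH : M <*> K \subset H by rewrite join_subG sMH (subset_trans sKN sNH).
have [mulMK | ltMKH] := eqVproper sMKH; last first.
  by rewrite -(maxM' (M <*> K)%G ltMKH (joing_subl M K)) joing_subr.
have sNK : N \subset K.
  rewrite -(setIidPl sNH) -mulMK norm_joinEl ?(subset_trans sMH nKH) //.
  by rewrite -group_modr // mul_subG // setIC.
by rewrite properE sNK andbF in ltKN.
Qed.

Lemma MaxDim_sdprod_ge : MaxDim_act T N + MaxDim T <= MaxDim H.
Proof.
have [S1 [maxS1 posS1] ->] := MaxDim_act_attained T N.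
have [S2 [maxS2 posS2] ->] := MaxDim_attained T.
pose f1 (K : {group gT}) := (K <*> T)%G; pose f2 (L : {group gT}) := (N <*> L)%G.
have sS1 K : K \in S1 -> K \subset N /\ T \subset 'N(K).
  by case/maxS1/maxgroupp/andP => /proper_sub.
have sS2 L : L \in S2 -> L \subset T by move/maxS2/maxgroupp/proper_sub.
have meetN K : K \in S1 -> f1 K :&: N = K.
  by case/sS1 => sKN nKT; apply: joinT_meetN.
have meetT L : L \in S2 -> f2 L :&: T = L.
  by move/sS2; apply: joinN_meetT.
have [pos1 inj1] : gen_pos N (f1 @: S1) /\ {in S1 &, injective f1}.
  by apply: gen_pos_imset posS1 => K KS; rewrite meetN // (setIidPl (proj1 (sS1 K KS))).
have [pos2 inj2] : gen_pos T (f2 @: S2) /\ {in S2 &, injective f2}.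
  by apply: gen_pos_imset posS2 => L LS; rewrite meetT // (setIidPl (sS2 L LS)).
have disjS : f1 @: S1 :&: f2 @: S2 = set0.
  apply/setP => X; rewrite !inE; apply/andP => -[/imsetP[K KS ->] /imsetP[L LS eqKL]].
  have /maxgroupp/andP[ltKN _] := maxS1 K KS.
  by move: ltKN; rewrite -(meetN K KS) eqKL (setIidPr (joing_subl N L)) properE subxx.
rewrite -(card_in_imset inj1) -(card_in_imset inj2) -cardsUI disjS cards0 addn0.
apply: card_le_MaxDim.
  move=> _ /setUP[] /imsetP[X XS ->].
    exact/maximal_joinT/maxS1.
  exact/maximal_joinN/maxS2.
apply: gen_posU pos1 pos2 => // [|] _ /imsetP[X _ ->]; [exact: joing_subr | exact: joing_subl].
Qed.

Lemma card_le_MaxDim_act_meetN (X : {set {group gT}}) :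
  abelian N -> {in X, forall M : {group gT}, maximal M H && ~~ (N \subset M)} ->
  gen_pos N X -> #|X| <= MaxDim_act T N.
Proof.
move=> abN maxX posX.
have [posXN injXN] : gen_pos N [set (M :&: N)%G | M in X] /\
                     {in X &, injective (fun M : {group gT} => (M :&: N)%G)}.
  by apply: gen_pos_imset posX => M _; rewrite /= -setIA setIid.
rewrite -(card_in_imset injXN); apply: card_le_MaxDim_act posXN.
by move=> _ /imsetP[M /maxX/andP[maxM sNM'] ->]; apply: maxinv_meetN.
Qed.

Lemma card_gen_pos_setD_le_i_irr (F X : {set {group gT}}) :
  gen_pos H F -> X \subset F ->
  {in F, forall M : {group gT}, N :&: \bigcap_(L in X) L \subset M} ->
  #|F :\: X| <= i_irr T.
Proof.
move=> /gen_posP posF sXF sNXF.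
have /fin_all_exists[g gP] : forall M : {group gT}, exists x, M \in F ->
    [/\ x \in H, x \notin M & forall L, L \in F -> L != M -> x \in L].
  move=> M; case: (boolP (M \in F)) => [/posF[x] | _]; last by exists 1.
  by exists x.
pose t M := remgr N T (g M).
pose W M := ((H :&: M :&: \bigcap_(L in X) L) <*> N)%G.
have gH M : M \in F -> g M \in N * T by rewrite mulNT; case/gP.
have tW M M' : M' \in F -> (t M' \in W M) = (g M' \in W M).
  move=> M'F; rewrite [in RHS](divgr_eq N T (g M')) groupMl //.
  exact/(subsetP (joing_subr _ _))/mem_divgr/gH.
have [irr inj_t] : irredundant (t @: (F :\: X)) /\ {in F :\: X &, injective t}.
  apply: (irredundant_imset (W := W))
    => [M /setDP[MF MX] | M M' /setDP[MF _] /setDP[M'F M'X] M'M].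
    rewrite tW // /W /= norm_joinEl; last first.
      exact: subset_trans (subsetIl _ _) (subset_trans (subsetIl _ _) nNH).
    apply/mulsgP => -[y n /setIP[/setIP[yH yM] /bigcapP yX] nN gMyn].
    have [_ gMM gML] := gP M MF.
    have gMX L : L \in X -> g M \in L.
      by move=> LX; apply: gML (subsetP sXF L LX) _; apply: contraNneq MX => <-.
    have nM : n \in M.
      apply: (subsetP (sNXF M MF)); rewrite inE nN; apply/bigcapP => L LX.
      by rewrite -(mulKg y n) -gMyn groupM ?groupV ?yX ?gMX.
    by case/negP: gMM; rewrite gMyn groupM.
  rewrite tW // (subsetP (joing_subl _ _)) //.
  have [g'H _ gL] := gP M' M'F.
  have gM'M : g M' \in M by apply: gL; rewrite // eq_sym.
  rewrite !in_setI g'H gM'M /=; apply/bigcapP => L LX.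
  by apply: gL (subsetP sXF L LX) _; apply: contraNneq M'X => <-.
rewrite -(card_in_imset inj_t); apply: card_le_i_irr irr.
by apply/subsetP => _ /imsetP[M /setDP[MF _] ->]; apply/mem_remgr/gH.
Qed.

Lemma MaxDim_sdprod_le : abelian N -> flat T ->
  MaxDim H <= MaxDim_act T N + MaxDim T.
Proof.
move=> abN /eqP flatT.
have [F [maxF posF] ->] := MaxDim_attained H.
pose A := [set M in F | ~~ (N \subset M)].
have [X sXA [posX capX]] := gen_pos_subfamily N A.
have sXF : X \subset F by apply: subset_trans sXA _; apply/subsetP => M /setIdP[].
rewrite -(cardsID X F) (setIidPr sXF) leq_add //.
  by apply: card_le_MaxDim_act_meetN posX => // M /(subsetP sXA) /setIdP[/maxF -> ->].
apply: (leq_trans _ (m_gen_le_MaxDim T)); rewrite flatT.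
apply: card_gen_pos_setD_le_i_irr => // M MF.
have [sNM | sNM'] := boolP (N \subset M); first exact: subset_trans (subsetIl _ _) sNM.
by rewrite capX; apply: subset_trans (subsetIr _ _) (bigcap_inf _ _); rewrite inE MF.
Qed.

End SemidirectProduct.

Theorem corollary3p5 (gT : finGroupType) (H N T : {group gT}) :
  N ><| T = H -> abelian N -> flat T ->
  MaxDim H = MaxDim_act T N + MaxDim T.
Proof.
move=> defH abN flatT; apply/eqP; rewrite eqn_leq.
by rewrite MaxDim_sdprod_le // MaxDim_sdprod_ge.
Qed.
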